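(* Consider the system $x(k+1)=Ax(k)+Bu(k)+w(k)$ in closed loop with the control scheme described in the context (Algorithm ATCS with parameter $\lambda$), and suppose that the problem $\mathbb{P}_0(x(0),\{0\})$ is feasible. Then: (i) for every iteration $k=1,2,\ldots$ reached by the algorithm and for any disturbance realization with $w(k)\in\mathcal{W}$ for all $k$, the problem $\mathbb{P}_k(x(k),\mathcal{Z}_{f,k})$, with the terminal set $\mathcal{Z}_{f,k}$ defined according to the algorithm (and with the additional constraint $N_k\le N^*_{k-1}-1$ whenever the second branch of the algorithm is taken), is feasible; (ii) if the weights $\gamma_v,\gamma_z\ge 0$ are selected such that $$\bar\lambda = 1-\sup_{w\in\mathcal{W}}\Big\{\gamma_z\sum_{j=0}^{\infty}\|A_K^j w\|+\gamma_v\sum_{j=0}^{\infty}\|K A_K^j w\|\Big\}>0$$ and $\lambda=\bar\lambda$ is used in the algorithm, then the optimal cost decreases by at least $\bar\lambda$ at each step, i.e. $J^*_{k+1}\le J^*_k-\bar\lambda$ for all $k$.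
   Context: System: $x(k+1)=Ax(k)+Bu(k)+w(k)$ with $x(k)\in\mathbb{R}^n$, $u(k)\in\mathbb{R}^m$, disturbance $w(k)\in\mathcal{W}$; state/input constraints $x(k)\in\mathcal{X}(k)$, $u(k)\in\mathcal{U}(k)$, where $\mathcal{X}(k),\mathcal{U}(k),\mathcal{W}$ are convex sets. A reference trajectory $r(k)\in\mathbb{R}^n$ is given. $K\in\mathbb{R}^{m\times n}$ is such that $A_K=A+BK$ is Schur. $\mathcal{A}\oplus\mathcal{B}=\{a+b: a\in\mathcal{A},b\in\mathcal{B}\}$ (Minkowski sum), $\mathcal{A}\ominus\mathcal{B}=\{a: \{a\}\oplus\mathcal{B}\subseteq\mathcal{A}\}$ (Pontryagin difference). Define $\mathcal{S}(0)=\{0\}$ and $\mathcal{S}(j)=\bigoplus_{i=0}^{j-1}A_K^i\mathcal{W}$ for $j\ge1$; tightened sets $\mathcal{Z}_k(j)=\mathcal{X}(k+j)\ominus\mathcal{S}(j)$, $\mathcal{V}_k(j)=\mathcal{U}(k+j)\ominus K\mathcal{S}(j)$. Fix weights $\gamma_z,\gamma_v\ge0$ and a vector norm $\|\cdot\|$ (possibly weighted). Problem $\mathbb{P}_k(x(k),\mathcal{Z}_f)$, for a convex set $\mathcal{Z}_f$: minimize over $N_k\in\{1,2,\ldots\}$, $v_k(0),\ldots,v_k(N_k-1)$, $z_k(0),\ldots,z_k(N_k)$ the cost $J_k=N_k+\gamma_z\sum_{j=0}^{N_k}\|z_k(j)-r(k+j)\|+\gamma_v\sum_{j=0}^{N_k-1}\|v_k(j)\|$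 subject to $z_k(0)=x(k)$, $z_k(j+1)=Az_k(j)+Bv_k(j)$, $z_k(j)\in\mathcal{Z}_k(j)$ for $j=1,\ldots,N_k-1$, $v_k(j)\in\mathcal{V}_k(j)$ for $j=0,\ldots,N_k-1$, and $z_k(N_k)\in\{r(k+N_k)\}\oplus\mathcal{Z}_f$. Algorithm ATCS (parameter $\lambda$): at $k=0$ solve $\mathbb{P}_0(x(0),\{0\})$, obtaining $(J_0^*,N_0^*,v_0^*,z_0^* )$; set $\mathcal{Z}_{f,0}=\{0\}$, $\bar N=N_0^*$, apply $u(0)=v_0^*(0)$. Then, while $N^*_{k}>1$, increment $k$ and: solve $\mathbb{P}_k(x(k),\{0\})$ with optimal cost $\tilde J_k^*$ ($\tilde J_k^*=\infty$ if infeasible). If $\tilde J_k^*>J^*_{k-1}-\lambda$, set $\mathcal{Z}_{f,k}=\mathcal{Z}_{f,k-1}\oplus A_K^{N^*_{k-1}-1}\mathcal{W}$ and solve $\mathbb{P}_k(x(k),\mathcal{Z}_{f,k})$ with the additional constraint $N_k\le N^*_{k-1}-1$, letting its solution be $(J_k^*,N_k^*,v_k^*,z_k^* )$; otherwise let $(J_k^*,N_k^*,v_k^*,z_k^* )$ be the solution of $\mathbb{P}_k(x(k),\{0\})$, set $\mathcal{Z}_{f,k}=\{0\}$ and $\bar N=N_k^*$. Apply $u(k)=v_k^*(0)$, so $x(k+1)=Ax(k)+Bu(k)+w(k)$ with $w(k)\in\mathcal{W}$ arbitrary. Upon termination, return $\bar N$. *)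

From mathcomp Require Import all_boot all_algebra.
From mathcomp Require Import all_classical all_reals all_analysis.
From mathcomp Require Import complex.
Set Implicit Arguments. Unset Strict Implicit. Unset Printing Implicit Defensive.
Import GRing.Theory Num.Theory.
Local Open Scope classical_set_scope.
Local Open Scope ring_scope.
Local Open Scope ereal_scope.
Local Open Scope ring_scope.

Section ATCS.
Variable R : realType.

Definition msum (p : nat) (SA SB : set 'cV[R]_p) : set 'cV[R]_p :=
  [set a + b | a in SA & b in SB].

Definition pdiff (p : nat) (SA SB : set 'cV[R]_p) : set 'cV[R]_p :=
  [set a | msum [set a] SB `<=` SA].

Definition mimage (p q : nat) (M : 'M[R]_(q, p)) (S : set 'cV[R]_p) : set 'cV[R]_q :=
  (fun s => M *m s) @` S.

Definition cvx_set (p : nat) (S : set 'cV[R]_p) : Prop :=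
  forall x y, S x -> S y -> forall t : R, 0 <= t <= 1 -> S (t *: x + (1 - t) *: y).

Definition is_norm (p : nat) (nu : 'cV[R]_p -> R) : Prop :=
  [/\ forall x, 0 <= nu x,
      forall x, nu x = 0 -> x = 0,
      forall (a : R) x, nu (a *: x) = `|a| * nu x
    & forall x y, nu (x + y) <= nu x + nu y].

Definition schur (p : nat) (M : 'M[R]_p) : Prop :=
  forall l : R[i], eigenvalue (map_mx (real_complex R) M) l -> `|l| < 1.

Variables (n m : nat).
Variables (A : 'M[R]_n) (B : 'M[R]_(n, m)) (K : 'M[R]_(m, n)).
Variables (X : nat -> set 'cV[R]_n) (U : nat -> set 'cV[R]_m) (W : set 'cV[R]_n).
Variables (r : nat -> 'cV[R]_n) (gz gv : R).
Variables (nz : 'cV[R]_n -> R) (nv : 'cV[R]_m -> R).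

Definition AK : 'M[R]_n := A + B *m K.

Fixpoint Sset (j : nat) : set 'cV[R]_n :=
  match j with
  | 0 => [set 0]
  | j'.+1 => msum (Sset j') (mimage (AK ^+ j') W)
  end.

Definition Zt (k j : nat) : set 'cV[R]_n := pdiff (X (k + j)) (Sset j).
Definition Vt (k j : nat) : set 'cV[R]_m := pdiff (U (k + j)) (mimage K (Sset j)).

Definition feasible (k : nat) (x : 'cV[R]_n) (Zf : set 'cV[R]_n)
  (N : nat) (v : nat -> 'cV[R]_m) (z : nat -> 'cV[R]_n) : Prop :=
  [/\ (0 < N)%N,
      z 0%N = x,
      (forall j, (j < N)%N -> z j.+1 = A *m z j + B *m v j),
      (forall j, (1 <= j <= N.-1)%N -> Zt k j (z j)) /\
      (forall j, (j < N)%N -> Vt k j (v j))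
    & msum [set r (k + N)%N] Zf (z N)].

Definition cost (k N : nat) (v : nat -> 'cV[R]_m) (z : nat -> 'cV[R]_n) : R :=
  N%:R + gz * (\sum_(j < N.+1) nz (z j - r (k + j)%N))
       + gv * (\sum_(j < N) nv (v j)).

(* optimal value of P_k(x, Zf) with additional constraint P on N_k;
   +oo if infeasible *)
Definition optval (k : nat) (x : 'cV[R]_n) (Zf : set 'cV[R]_n) (P : nat -> Prop)
  : \bar R :=
  ereal_inf [set e | exists N v z, [/\ feasible k x Zf N v z, P N & e = (cost k N v z)%:E]].

Definition optimal (k : nat) (x : 'cV[R]_n) (Zf : set 'cV[R]_n) (P : nat -> Prop)
  (N : nat) (v : nat -> 'cV[R]_m) (z : nat -> 'cV[R]_n) : Prop :=
  [/\ feasible k x Zf N v z, P N & (cost k N v z)%:E = optval k x Zf P].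

(* An execution of Algorithm ATCS with parameter lam:
   x = state trajectory, w = disturbances, Ns/vs/zs = selected optimal
   solutions, Zf = terminal sets. *)
Variables (lam : R) (x w : nat -> 'cV[R]_n) (Ns : nat -> nat)
  (vs : nat -> nat -> 'cV[R]_m) (zs : nat -> nat -> 'cV[R]_n)
  (Zf : nat -> set 'cV[R]_n).

Definition Js (k : nat) : R := cost k (Ns k) (vs k) (zs k).

Definition branch1 (k : nat) : Prop :=
  (optval k (x k) [set 0%R] (fun _ => True) > (Js k.-1 - lam)%:E)%E.

Definition Zf_branch1 (k : nat) : set 'cV[R]_n :=
  msum (Zf k.-1) (mimage (AK ^+ (Ns k.-1).-1) W).

Definition step0 : Prop :=
  Zf 0%N = [set 0] /\
  optimal 0 (x 0%N) [set 0] (fun _ => True) (Ns 0%N) (vs 0%N) (zs 0%N).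

Definition step (k : nat) : Prop :=
  [/\ (1 < Ns k.-1)%N,
      W (w k.-1),
      x k = A *m x k.-1 + B *m vs k.-1 0%N + w k.-1,
      (branch1 k -> Zf k = Zf_branch1 k /\
        optimal k (x k) (Zf k) (fun N => (N <= (Ns k.-1).-1)%N) (Ns k) (vs k) (zs k))
    & (~ branch1 k -> Zf k = [set 0] /\
        optimal k (x k) [set 0] (fun _ => True) (Ns k) (vs k) (zs k))].

Definition run_upto (T : nat) : Prop :=
  step0 /\ forall k, (1 <= k <= T)%N -> step k.

End ATCS.

Definition dist_gain (R : realType) (n m : nat) (A : 'M[R]_n) (B : 'M[R]_(n, m))
  (K : 'M[R]_(m, n)) (W : set 'cV[R]_n) (gz gv : R)
  (nz : 'cV[R]_n -> R) (nv : 'cV[R]_m -> R) : \bar R :=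
  ereal_sup [set ((gz%:E * (\sum_(j <oo) (nz ((AK A B K) ^+ j *m w0))%:E))
                 + (gv%:E * (\sum_(j <oo) (nv (K *m ((AK A B K) ^+ j *m w0)))%:E)))%E
            | w0 in W].

From Pilot Require Import Defs.
From mathcomp Require Import all_boot all_algebra.
From mathcomp Require Import all_classical all_reals all_analysis.
From mathcomp Require Import complex.
From mathcomp Require Import lra.
Set Implicit Arguments. Unset Strict Implicit. Unset Printing Implicit Defensive.
Import order.Order.TTheory GRing.Theory Num.Theory.
Local Open Scope classical_set_scope.
Local Open Scope ring_scope.

(* Shifting the previous optimal plan by one step and correcting it by the
   propagated disturbance, v(j) := v*(j+1) + K A_K^j w(k) and
   z(j) := z*(j+1) + A_K^j w(k), gives a plan of horizon N* - 1 that is feasible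
   for the enlarged terminal set, because the tightening
   S(j+1) = S(j) (+) A_K^j W absorbs exactly this correction.  By the triangle
   inequality its cost is the previous optimal cost, minus the dropped first
   stage (which costs at least 1), plus a truncation of the disturbance gain,
   hence at most J* - 1 + (1 - lambda_bar).  When the algorithm keeps the
   terminal set {0} instead, the decrease is the branch condition itself. *)

Section MinkowskiCalculus.
Variables (R : realType) (p : nat).
Implicit Types (S T V Y : set 'cV[R]_p).

Lemma msum_addr S T V a t :
  Defs.msum S T a -> V t -> Defs.msum S (Defs.msum T V) (a + t).
Proof.
case=> s Ss [u Tu <-] Vt; exists s => //.
by exists (u + t); [exists u => //; exists t | rewrite addrA].
Qed.

Lemma pdiff_msum_addr Y S T a t :
  pdiff Y (Defs.msum S T) a -> T t -> pdiff Y S (a + t).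
Proof.
move=> Ya Tt y [b /= -> [s Ss <-]]; apply: Ya.
exists a => //; exists (s + t); last by rewrite addrAC addrA.
by exists s => //; exists t.
Qed.

Lemma mimage_msum (q : nat) (M : 'M[R]_(q, p)) S T :
  mimage M (Defs.msum S T) = Defs.msum (mimage M S) (mimage M T).
Proof.
apply/seteqP; split=> y.
  case=> _ [s Ss [t Tt <-]] <-; exists (M *m s); first by exists s.
  by exists (M *m t); [exists t | rewrite mulmxDr].
case=> _ [s Ss <-] [_ [t Tt <-] <-].
by exists (s + t); [exists s => //; exists t | rewrite mulmxDr].
Qed.

End MinkowskiCalculus.

Section ClosedLoop.
Variables (R : realType) (n m : nat).
Variables (A : 'M[R]_n) (B : 'M[R]_(n, m)) (K : 'M[R]_(m, n)).
Variables (X : nat -> set 'cV[R]_n) (U : nat -> set 'cV[R]_m) (W : set 'cV[R]_n).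
Variables (r : nat -> 'cV[R]_n).

Local Notation AK := (AK A B K).

Lemma AK_exprS j : AK ^+ j.+1 = A *m AK ^+ j + B *m (K *m AK ^+ j).
Proof. by rewrite exprS -mulmxE mulmxDl mulmxA. Qed.

Definition shift_input (v : nat -> 'cV[R]_m) (wk : 'cV[R]_n) j :=
  v j.+1 + K *m (AK ^+ j *m wk).

Definition shift_state (z : nat -> 'cV[R]_n) (wk : 'cV[R]_n) j :=
  z j.+1 + AK ^+ j *m wk.

Lemma feasible_shift k x0 Zf0 N v z wk :
  feasible A B K X U W r k x0 Zf0 N.+1 v z -> (0 < N)%N -> W wk ->
  feasible A B K X U W r k.+1 (A *m x0 + B *m v 0%N + wk)
    (Defs.msum Zf0 (mimage (AK ^+ N) W)) N (shift_input v wk) (shift_state z wk).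
Proof.
case=> _ z0 dyn [stateC inputC] term N0 Wwk.
have AKw j : mimage (AK ^+ j) W (AK ^+ j *m wk) by exists wk.
split => //.
- by rewrite /shift_state expr0 mul1mx dyn // z0.
- move=> j jN; rewrite /shift_state /shift_input dyn // (AK_exprS j).
  by rewrite !mulmxDr !mulmxDl !mulmxA !addrA (addrAC (A *m z j.+1)).
- split=> j jN.
  + rewrite /Zt addSnnS; apply: pdiff_msum_addr (AKw j).
    by apply: stateC; case/andP: jN => _; rewrite /= -(prednK N0) ltnS.
  + rewrite /Vt addSnnS.
    apply: (pdiff_msum_addr (T := mimage K (mimage (AK ^+ j) W))).
      by rewrite -mimage_msum; apply: inputC.
    by exists (AK ^+ j *m wk).
- by rewrite /shift_state addSnnS; apply: msum_addr.
Qed.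

Variables (gz gv : R) (nz : 'cV[R]_n -> R) (nv : 'cV[R]_m -> R).
Hypotheses (gz_ge0 : 0 <= gz) (gv_ge0 : 0 <= gv).
Hypotheses (nz_ge0 : forall y, 0 <= nz y) (nv_ge0 : forall u, 0 <= nv u).
Hypothesis nz_triangle : forall y y', nz (y + y') <= nz y + nz y'.
Hypothesis nv_triangle : forall u u', nv (u + u') <= nv u + nv u'.

Definition truncated_gain N wk :=
  gz * \sum_(j < N.+1) nz (AK ^+ j *m wk) + gv * \sum_(j < N) nv (K *m (AK ^+ j *m wk)).

Lemma cost_shift_le k N v z wk :
  cost r gz gv nz nv k.+1 N (shift_input v wk) (shift_state z wk)
  <= cost r gz gv nz nv k N.+1 v z - 1 + truncated_gain N wk.
Proof.
have state_le : \sum_(j < N.+1) nz (shift_state z wk j - r (k.+1 + j)%N)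
    <= \sum_(j < N.+1) nz (z j.+1 - r (k + j.+1)%N) + \sum_(j < N.+1) nz (AK ^+ j *m wk).
  rewrite -big_split; apply: ler_sum => j _.
  by rewrite /shift_state addSnnS addrAC nz_triangle.
have input_le : \sum_(j < N) nv (shift_input v wk j)
    <= \sum_(j < N) nv (v j.+1) + \sum_(j < N) nv (K *m (AK ^+ j *m wk)).
  by rewrite -big_split; apply: ler_sum => j _; apply: nv_triangle.
have := ler_wpM2l gz_ge0 state_le; have := ler_wpM2l gv_ge0 input_le.
have := mulr_ge0 gz_ge0 (nz_ge0 (z 0%N - r (k + 0)%N)).
have := mulr_ge0 gv_ge0 (nv_ge0 (v 0%N)).
have state_recl : \sum_(j < N.+2) nz (z j - r (k + j)%N)
    = nz (z 0%N - r (k + 0)%N) + \sum_(j < N.+1) nz (z j.+1 - r (k + j.+1)%N).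
  exact: big_ord_recl.
have input_recl : \sum_(j < N.+1) nv (v j) = nv (v 0%N) + \sum_(j < N) nv (v j.+1).
  exact: big_ord_recl.
rewrite /cost /truncated_gain state_recl input_recl -natr1 !mulrDr.
lra.
Qed.

Lemma truncated_gain_le_dist_gain N wk :
  W wk -> ((truncated_gain N wk)%:E <= dist_gain A B K W gz gv nz nv)%E.
Proof.
move=> Wwk; apply: le_trans (ereal_sup_ubound _); last by exists wk.
rewrite EFinD !EFinM; apply: leeD; apply: lee_wpmul2l; rewrite ?lee_fin //.
  rewrite -sumEFin -(big_mkord xpredT (fun j => (nz (AK ^+ j *m wk))%:E)).
  by apply: nneseries_lim_ge => j _ _; rewrite lee_fin.
rewrite -sumEFin -(big_mkord xpredT (fun j => (nv (K *m (AK ^+ j *m wk)))%:E)).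
by apply: nneseries_lim_ge => j _ _; rewrite lee_fin.
Qed.

Lemma optval_le_cost k x0 Zf0 (P : nat -> Prop) N v z :
  feasible A B K X U W r k x0 Zf0 N v z -> P N ->
  (optval A B K X U W r gz gv nz nv k x0 Zf0 P <= (cost r gz gv nz nv k N v z)%:E)%E.
Proof. by move=> F PN; apply: ereal_inf_lbound; exists N, v, z. Qed.

Lemma optval_lt_feasible k x0 Zf0 (P : nat -> Prop) :
  (optval A B K X U W r gz gv nz nv k x0 Zf0 P < +oo)%E ->
  exists N v z, feasible A B K X U W r k x0 Zf0 N v z.
Proof.
apply: contraPP => infeasible.
rewrite /optval (_ : [set _ | _] = set0) ?ereal_inf0 ?ltxx //.
by apply/seteqP; split=> // e [N [v [z [F _ _]]]]; apply: infeasible; exists N, v, z.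
Qed.

Variables (lam : R) (x w : nat -> 'cV[R]_n) (Ns : nat -> nat).
Variables (vs : nat -> nat -> 'cV[R]_m) (zs : nat -> nat -> 'cV[R]_n).
Variable Zf : nat -> set 'cV[R]_n.

Local Notation run_upto := (run_upto A B K X U W r gz gv nz nv lam x w Ns vs zs Zf).
Local Notation branch1 := (branch1 A B K X U W r gz gv nz nv lam x Ns vs zs).
Local Notation Js := (Js r gz gv nz nv Ns vs zs).

Lemma run_uptoW k : run_upto k.+1 -> run_upto k.
Proof.
by case=> start steps; split=> // j /andP[j1 jk]; apply: steps; rewrite j1 ltnW.
Qed.

Lemma run_upto_feasible k :
  run_upto k -> feasible A B K X U W r k (x k) (Zf k) (Ns k) (vs k) (zs k).
Proof.
case=> [[Zf0E [F0 _ _]] steps]; case: k steps => [|k] steps; first by rewrite Zf0E.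
have [_ _ _ br1 br0] := steps k.+1 (leqnn _).
by case: (pselect (branch1 k.+1)) => [/br1 [_ []]|/br0 [-> []]].
Qed.

Lemma run_upto_shift_feasible k :
  run_upto k -> (1 < Ns k)%N -> W (w k) ->
  x k.+1 = A *m x k + B *m vs k 0%N + w k ->
  feasible A B K X U W r k.+1 (x k.+1) (Zf_branch1 A B K W Ns Zf k.+1) (Ns k).-1
    (shift_input (vs k) (w k)) (shift_state (zs k) (w k)).
Proof.
move=> /run_upto_feasible F Ns1 Wwk ->.
rewrite -(prednK (ltnW Ns1)) in F.
by apply: feasible_shift F _ Wwk; rewrite ltn_predRL.
Qed.

Lemma run_upto_cost_decrease k :
  run_upto k.+1 -> (dist_gain A B K W gz gv nz nv <= (1 - lam)%:E)%E ->
  Js k.+1 <= Js k - lam.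
Proof.
move=> run gain; have [_ steps] := run.
have [Ns1 Wwk xE br1 br0] := steps k.+1 (leqnn _).
rewrite -lee_fin /Defs.Js.
have [b|b] := pselect (branch1 k.+1); last first.
  have [_ [_ _ ->]] := br0 b.
  by move/negP: b; rewrite -leNgt.
have [-> [_ _ ->]] := br1 b.
have F := run_upto_shift_feasible (run_uptoW run) Ns1 Wwk xE.
apply: le_trans (optval_le_cost F (leqnn _)) _; rewrite lee_fin.
apply: le_trans (cost_shift_le _ _ _ _ _) _; rewrite prednK ?(ltnW Ns1) //.
have := le_trans (truncated_gain_le_dist_gain (Ns k).-1 Wwk) gain.
rewrite lee_fin; lra.
Qed.

End ClosedLoop.

Theorem theorem1 (R : realType) (n m : nat)
  (A : 'M[R]_n) (B : 'M[R]_(n, m)) (K : 'M[R]_(m, n))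
  (X : nat -> set 'cV[R]_n) (U : nat -> set 'cV[R]_m) (W : set 'cV[R]_n)
  (r : nat -> 'cV[R]_n) (gz gv : R)
  (nz : 'cV[R]_n -> R) (nv : 'cV[R]_m -> R) (lam : R)
  (x w : nat -> 'cV[R]_n) (Ns : nat -> nat)
  (vs : nat -> nat -> 'cV[R]_m) (zs : nat -> nat -> 'cV[R]_n)
  (Zf : nat -> set 'cV[R]_n) :
  schur (AK A B K) ->
  (forall k, cvx_set (X k)) -> (forall k, cvx_set (U k)) -> cvx_set W ->
  0 <= gz -> 0 <= gv -> is_norm nz -> is_norm nv ->
  (exists N v z, feasible A B K X U W r 0 (x 0%N) [set 0] N v z) ->
  (* (i) recursive feasibility *)
  (forall k, (1 <= k)%N ->
     run_upto A B K X U W r gz gv nz nv lam x w Ns vs zs Zf k.-1 ->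
     (1 < Ns k.-1)%N ->
     W (w k.-1) ->
     x k = A *m x k.-1 + B *m vs k.-1 0%N + w k.-1 ->
     (branch1 A B K X U W r gz gv nz nv lam x Ns vs zs k ->
        exists N v z, feasible A B K X U W r k (x k) (Zf_branch1 A B K W Ns Zf k) N v z
                      /\ (N <= (Ns k.-1).-1)%N) /\
     (~ branch1 A B K X U W r gz gv nz nv lam x Ns vs zs k ->
        exists N v z, feasible A B K X U W r k (x k) [set 0] N v z))
  /\
  (* (ii) cost decrease when lam = lambda_bar > 0 *)
  ((lam%:E = 1 - dist_gain A B K W gz gv nz nv)%E -> 0 < lam ->
   forall k, run_upto A B K X U W r gz gv nz nv lam x w Ns vs zs Zf k.+1 ->
     Js r gz gv nz nv Ns vs zs k.+1 <= Js r gz gv nz nv Ns vs zs k - lam).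
Proof.
move=> _ _ _ _ gz_ge0 gv_ge0 [nz_ge0 _ _ nz_triangle] [nv_ge0 _ _ nv_triangle] _.
split.
  move=> [//|k] _ /= run Ns1 Wwk xE; split=> [_|not_branch1].
    by do 3 eexists; split; first exact: run_upto_shift_feasible run Ns1 Wwk xE.
  apply: (optval_lt_feasible (P := fun=> True)).
  move/negP: not_branch1; rewrite -leNgt => /le_lt_trans; apply; exact: ltey.
move=> lamE _ k run; apply: run_upto_cost_decrease run _ => //.
by move: lamE; case: dist_gain => // g [->]; rewrite subKr.
Qed.
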